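(* Let $H$ be an $r$-uniform hypergraph and $k\geq 1$ an integer. For any vertex $v\in S_i$, the depth of $v$ is at least $i$.
   Context: The parallel $k$-stripping process applied to $H$ repeatedly removes, in each round, all vertices of degree less than $k$ simultaneously together with all hyperedges containing them, until none remain; $S_i$ is the set of vertices removed in round $i$. A $k$-stripping sequence is a sequence of vertices that can be deleted one at a time (each with its incident hyperedges) such that each has degree less than $k$ at the time of its deletion. For a vertex $v$ not in the $k$-core (the maximum subhypergraph of minimum degree at least $k$), its depth is the length of a shortest $k$-stripping sequence ending with $v$. *)

From mathcomp Require Import all_boot.
Set Implicit Arguments. Unset Strict Implicit. Unset Printing Implicit Defensive.

Section Hyper.
Variables (V : finType) (H : {set {set V}}) (k : nat).

Definition uniform (r : nat) : Prop := forall e, e \in H -> #|e| = r.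

(* Degree of v in the hypergraph obtained from H by deleting the vertex set D
   together with all hyperedges meeting D. *)
Definition deg_del (D : {set V}) (v : V) : nat :=
  #|[set e in H | (v \in e) && [disjoint e & D]]|.

Fixpoint removed (n : nat) : {set V} :=
  match n with
  | 0 => set0
  | n.+1 => let R := removed n in
            R :|: [set v | (v \notin R) && (deg_del R v < k)]
  end.

(* S_i: vertices removed in round i (i >= 1); S_0 is empty. *)
Definition S (i : nat) : {set V} := removed i :\: removed i.-1.

Fixpoint strip_from (D : {set V}) (s : seq V) : bool :=
  match s with
  | [::] => true
  | x :: s' => [&& x \notin D, deg_del D x < k & strip_from (x |: D) s']
  end.

Definition strip_seq (s : seq V) : bool := strip_from set0 s.

Definition strip_seq_ending (v : V) (s : seq V) : bool :=
  [&& strip_seq s, 0 < size s & last v s == v].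

(* Depth of v: length of a shortest k-stripping sequence ending with v.
   Sequences have distinct entries, so lengths are at most #|V|; if no such
   sequence exists (v in the k-core) the value defaults to #|V|.+1. *)
Definition depth (v : V) : nat :=
  find (fun n => [exists t : n.-tuple V, strip_seq_ending v t])
       (iota 0 #|V|.+1).

End Hyper.

From mathcomp Require Import all_boot.

Set Implicit Arguments.
Unset Strict Implicit.
Unset Printing Implicit Defensive.

(* A k-stripping sequence is slower than the parallel process: by induction,
   its j-th vertex has already been removed after j rounds, because deleting
   more vertices only lowers degrees.  A vertex of S_i survives round i - 1,
   so every stripping sequence ending with it has length at least i.  When no
   such sequence exists the depth is |V| + 1, which is still at least i: the
   removed sets grow strictly until the process stabilises. *)

Section ParallelStripping.
Variables (V : finType) (H : {set {set V}}) (k : nat).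

Local Notation removed := (removed H k).

Lemma deg_del_anti (D1 D2 : {set V}) v :
  D1 \subset D2 -> deg_del H D2 v <= deg_del H D1 v.
Proof.
move=> sD12; apply: subset_leq_card; apply/subsetP => e.
by rewrite !inE => /and3P[-> -> /= /disjointWr->].
Qed.

Lemma removed_le : {homo removed : m n / m <= n >-> m \subset n}.
Proof. by apply: homo_leq => [A|A B C|n]; [exact: subxx|exact: subset_trans|exact: subsetUl]. Qed.

Lemma mem_removedS (D : {set V}) m x :
  D \subset removed m -> deg_del H D x < k -> x \in removed m.+1.
Proof.
move=> sD ltk; rewrite /= !inE; case: (x \in removed m) => //=.
exact: leq_ltn_trans (deg_del_anti x sD) ltk.
Qed.

Lemma removed_stable j n :
  removed j.+1 = removed j -> j <= n -> removed n = removed j.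
Proof.
move=> fix_j /subnK <-; elim: (n - j) => //= d IH.
by rewrite IH -/(removed j.+1) fix_j.
Qed.

Lemma card_removed_gt n : removed n.+1 != removed n -> n < #|removed n.+1|.
Proof.
move=> grown; have strict j : j <= n -> removed j \proper removed j.+1.
  move=> le_jn; rewrite properEneq removed_le // andbT eq_sym.
  apply: contra grown => /eqP fix_j.
  by rewrite !(removed_stable fix_j) // leqW.
suff card_ge j : j <= n.+1 -> j <= #|removed j| by apply: card_ge.
elim: j => // j IH lt_jn.
exact: leq_ltn_trans (IH (ltnW lt_jn)) (proper_card (strict j lt_jn)).
Qed.

Lemma strip_from_last_removed (D : {set V}) m s x0 :
  strip_from H k D s -> D \subset removed m -> 0 < size s ->
  last x0 s \in removed (m + size s).
Proof.
elim: s x0 D m => // x s IH x0 D m /= /and3P[_ ltk strip_s] sD _.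
have x_removed := mem_removedS sD ltk.
case: s IH strip_s => [|y s] IH strip_s; first by rewrite addn1.
rewrite -addSnnS; apply: IH strip_s _ isT.
by rewrite subUset sub1set x_removed (subset_trans sD) ?removed_le.
Qed.

Lemma strip_seq_ending_removed v s :
  strip_seq_ending H k v s -> v \in removed (size s).
Proof.
case/and3P=> strip_s s_gt0 /eqP last_v.
by rewrite -{1}last_v -[size s]add0n (strip_from_last_removed _ strip_s) ?sub0set.
Qed.

Lemma depth_witness v : depth H k v <= #|V| ->
  exists2 s, strip_seq_ending H k v s & size s = depth H k v.
Proof.
rewrite /depth; set P := fun n => _; set l := iota 0 _ => le_depth.
have has_P : has P l by rewrite has_find size_iota.
have := nth_find 0 has_P; rewrite /l nth_iota ?add0n //.
by case/existsP=> t strip_t; exists t; rewrite ?size_tuple.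
Qed.

End ParallelStripping.

Theorem lemma22 (V : finType) (H : {set {set V}}) (r k : nat)
  (Hunif : uniform H r) (Hk : 1 <= k) (i : nat) (v : V) :
  v \in S H k i -> i <= depth H k v.
Proof.
rewrite /S inE => /andP[v_late v_removed].
have i_gt0 : 0 < i by case: i v_late v_removed => //; rewrite inE.
have grown : removed H k i != removed H k i.-1.
  by apply: contraNneq v_late => <-.
have le_iV : i <= #|V|.
  rewrite -(prednK i_gt0) in grown *.
  exact: leq_trans (card_removed_gt grown) (max_card _).
case: (leqP i (depth H k v)) => // lt_depth.
have [s ending size_s] := depth_witness (ltnW (leq_trans lt_depth le_iV)).
have := strip_seq_ending_removed ending; rewrite size_s => v_early.
have /subsetP/(_ v v_early) : removed H k (depth H k v) \subset removed H k i.-1.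
  by apply: removed_le; rewrite -ltnS prednK.
by rewrite (negbTE v_late).
Qed.
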